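(* Let $\mathbb{S}=(\mathsf{S},\mu,\eta)$ be a Cartesian $k$-differential monad on a Cartesian $k$-differential category $\mathbb{X}$. Let $\mathsf{DIFF}[\mathsf{EM}(\mathbb{S})]$ be the full subcategory of $\mathsf{EM}(\mathbb{S})$ on the $\mathbb{S}$-algebras $(A,\alpha)$ with $\alpha$ $\mathsf{D}$-linear (equivalently, the differential objects of $\mathsf{EM}(\mathbb{S})$). Then $\mathsf{DIFF}[\mathsf{EM}(\mathbb{S})]$ is a Cartesian $k$-differential category, with products as in $\mathsf{EM}(\mathbb{S})$ and with the $k$-module structure on hom-sets and the differential combinator computed in $\mathbb{X}$, such that the forgetful functor $\mathsf{DIFF}[\mathsf{EM}(\mathbb{S})]\to\mathbb{X}$ is a strict Cartesian $k$-differential functor. In particular, if $\alpha$ and $\beta$ are $\mathsf{D}$-linear $\mathbb{S}$-algebra structures on $A$ and $B$, then for every $\mathbb{S}$-algebra morphism $f:(A,\alpha)\to(B,\beta)$, the derivative $\mathsf{D}[f]$ is an $\mathbb{S}$-algebra morphism $(A\times A,(\alpha\times\alpha)\circ\omega_{A,A})\to(B,\beta)$.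
   Context: Fix a commutative semiring $k$. A left $k$-linear category is a category $\mathbb{X}$ in which each hom-set $\mathbb{X}(A,B)$ is a $k$-module (scalar multiplication $r\cdot f$, addition $+$, zero $0$) such that precomposition is $k$-linear: $(r\cdot f+s\cdot g)\circ x=r\cdot(f\circ x)+s\cdot(g\circ x)$. A map $f$ is $k$-linear if $f\circ(r\cdot x+s\cdot y)=r\cdot(f\circ x)+s\cdot(f\circ y)$ for all suitable $x,y$ and $r,s\in k$. A Cartesian left $k$-linear category is a left $k$-linear category with finite products (terminal object $\ast$, projections $\pi_j:A_1\times\cdots\times A_n\to A_j$, pairing $\langle-,\dots,-\rangle$) in which all projections are $k$-linear. A Cartesian $k$-differential category is a Cartesian left $k$-linear category equipped with a differential combinator $\mathsf{D}$ assigning to each $f:A\to B$ a map $\mathsf{D}[f]:A\times A\to B$ such that: [CD.1] $\mathsf{D}[r\cdot f+s\cdot g]=r\cdot\mathsf{D}[f]+s\cdot\mathsf{D}[g]$; [CD.2] $\mathsf{D}[f]\circ\langle\pi_1,r\cdot\pi_2+s\cdot\pi_3\rangle=r\cdot(\mathsf{D}[f]\circ\langle\pi_1,\pi_2\rangle)+s\cdot(\mathsf{D}[f]\circ\langle\pi_1,\pi_3\rangle)$ (as maps $A\times A\times A\to B$); [CD.3] $\mathsf{D}[1_A]=\pi_2$ and, for $\pi_j:A_1\times\cdots\times A_n\to A_j$, $\mathsf{D}[\pi_j]=\pi_{n+j}$; [CD.4] $\mathsf{D}[\langle f_1,\dots,f_n\rangle]=\langle\mathsf{D}[f_1],\dots,\mathsf{D}[f_n]\rangle$;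 [CD.5] $\mathsf{D}[g\circ f]=\mathsf{D}[g]\circ\langle f\circ\pi_1,\mathsf{D}[f]\rangle$; [CD.6] $\mathsf{D}[\mathsf{D}[f]]\circ\langle\pi_1,0,0,\pi_2\rangle=\mathsf{D}[f]$; [CD.7] $\mathsf{D}[\mathsf{D}[f]]\circ\langle\pi_1,\pi_2,\pi_3,\pi_4\rangle=\mathsf{D}[\mathsf{D}[f]]\circ\langle\pi_1,\pi_3,\pi_2,\pi_4\rangle$ (identifying $(A\times A)\times(A\times A)$ with $A\times A\times A\times A$). A map $f$ is $\mathsf{D}$-linear if $\mathsf{D}[f]=f\circ\pi_2$. For Cartesian left $k$-linear categories $\mathbb{X},\mathbb{Y}$, a strong Cartesian $k$-linear functor is a functor $\mathsf{F}:\mathbb{X}\to\mathbb{Y}$ such that $\mathsf{F}(\ast)\to\ast$ is an isomorphism, the canonical maps $\omega_{A_1,\dots,A_n}=\langle\mathsf{F}(\pi_1),\dots,\mathsf{F}(\pi_n)\rangle:\mathsf{F}(A_1\times\cdots\times A_n)\to\mathsf{F}(A_1)\times\cdots\times\mathsf{F}(A_n)$ are isomorphisms, and $\mathsf{F}(r\cdot f+s\cdot g)=r\cdot\mathsf{F}(f)+s\cdot\mathsf{F}(g)$. It is strict if moreover $\omega$ is the identity. For Cartesian $k$-differential categories, a strong Cartesian $k$-differential functor is a strong Cartesian $k$-linear functor with $\mathsf{D}[\mathsf{F}(f)]=\mathsf{F}(\mathsf{D}[f])\circ\omega^{-1}_{A,A}$ for all $f:A\to B$; a strict Cartesian $k$-differential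 functor is a strict Cartesian $k$-linear functor with $\mathsf{D}[\mathsf{F}(f)]=\mathsf{F}(\mathsf{D}[f])$. A Cartesian $k$-differential monad on a Cartesian $k$-differential category $\mathbb{X}$ is a monad $\mathbb{S}=(\mathsf{S},\mu,\eta)$ on $\mathbb{X}$ such that $\mathsf{S}$ is a strong Cartesian $k$-differential functor and every $\eta_A$ and $\mu_A$ is $\mathsf{D}$-linear. $\mathsf{EM}(\mathbb{S})$ is the category of $\mathbb{S}$-algebras $(A,\alpha)$, $\alpha:\mathsf{S}(A)\to A$ with $\alpha\circ\mu_A=\alpha\circ\mathsf{S}(\alpha)$ and $\alpha\circ\eta_A=1_A$, and algebra morphisms $f:(A,\alpha)\to(B,\beta)$, i.e. $\beta\circ\mathsf{S}(f)=f\circ\alpha$. It has finite products $(A,\alpha)\times(B,\beta)=(A\times B,(\alpha\times\beta)\circ\omega_{A,B})$ and terminal object $(\ast,0)$. *)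

From HB Require Import structures.
From mathcomp Require Import all_boot ssralg.
Set Implicit Arguments. Unset Strict Implicit. Unset Printing Implicit Defensive.
Import GRing.Theory.
Local Open Scope ring_scope.

Record CDCData (k : comPzSemiRingType) := {
  ob : Type;
  hom : ob -> ob -> Type;
  idm : forall A, hom A A;
  comp : forall A B C, hom B C -> hom A B -> hom A C;
  addm : forall A B, hom A B -> hom A B -> hom A B;
  zerom : forall A B, hom A B;
  scalm : forall A B, k -> hom A B -> hom A B;
  term : ob;
  bang : forall A, hom A term;
  prod : ob -> ob -> ob;
  pr1 : forall A B, hom (prod A B) A;
  pr2 : forall A B, hom (prod A B) B;
  pair : forall C A B, hom C A -> hom C B -> hom C (prod A B);
  Dc : forall A B, hom A B -> hom (prod A A) B
}.

Arguments ob {k} X : rename.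
Arguments hom {k} X A B : rename.
Arguments idm {k X} A : rename.
Arguments comp {k X A B C} g f : rename.
Arguments addm {k X A B} f g : rename.
Arguments zerom {k X} A B : rename.
Arguments scalm {k X A B} r f : rename.
Arguments term {k} X : rename.
Arguments bang {k X} A : rename.
Arguments prod {k X} A B : rename.
Arguments pr1 {k X} A B : rename.
Arguments pr2 {k X} A B : rename.
Arguments pair {k X C A B} f g : rename.
Arguments Dc {k X A B} f : rename.

Section CDCLaws.
Context {k : comPzSemiRingType} (X : CDCData k).

Definition lincomb (A B : ob X) (r s : k) (f g : hom X A B) : hom X A B :=
  addm (scalm r f) (scalm s g).

Record CDCLaws : Prop := {
  comp_assoc : forall (A B C E : ob X) (h : hom X C E) (g : hom X B C) (f : hom X A B),
      comp h (comp g f) = comp (comp h g) f;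
  comp_id_l : forall (A B : ob X) (f : hom X A B), comp (idm B) f = f;
  comp_id_r : forall (A B : ob X) (f : hom X A B), comp f (idm A) = f;
  addmA : forall (A B : ob X) (f g h : hom X A B), addm f (addm g h) = addm (addm f g) h;
  addmC : forall (A B : ob X) (f g : hom X A B), addm f g = addm g f;
  add0m : forall (A B : ob X) (f : hom X A B), addm (zerom A B) f = f;
  scalmA : forall (A B : ob X) (r s : k) (f : hom X A B), scalm r (scalm s f) = scalm (r * s) f;
  scal1m : forall (A B : ob X) (f : hom X A B), scalm 1 f = f;
  scalmDr : forall (A B : ob X) (r : k) (f g : hom X A B),
      scalm r (addm f g) = addm (scalm r f) (scalm r g);
  scalmDl : forall (A B : ob X) (r s : k) (f : hom X A B),
      scalm (r + s) f = addm (scalm r f) (scalm s f);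
  scal0m : forall (A B : ob X) (f : hom X A B), scalm 0 f = zerom A B;
  scalm0 : forall (A B : ob X) (r : k), scalm r (zerom A B) = zerom A B;
  comp_linl : forall (A B C : ob X) (f g : hom X B C) (x : hom X A B) (r s : k),
      comp (lincomb r s f g) x = lincomb r s (comp f x) (comp g x);
  bang_uniq : forall (A : ob X) (f : hom X A (term X)), f = bang A;
  pr1_pair : forall (C A B : ob X) (f : hom X C A) (g : hom X C B), comp (pr1 A B) (pair f g) = f;
  pr2_pair : forall (C A B : ob X) (f : hom X C A) (g : hom X C B), comp (pr2 A B) (pair f g) = g;
  pair_uniq : forall (C A B : ob X) (h : hom X C (prod A B)),
      h = pair (comp (pr1 A B) h) (comp (pr2 A B) h);
  pr1_lin : forall (C A B : ob X) (x y : hom X C (prod A B)) (r s : k),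
      comp (pr1 A B) (lincomb r s x y) = lincomb r s (comp (pr1 A B) x) (comp (pr1 A B) y);
  pr2_lin : forall (C A B : ob X) (x y : hom X C (prod A B)) (r s : k),
      comp (pr2 A B) (lincomb r s x y) = lincomb r s (comp (pr2 A B) x) (comp (pr2 A B) y);
  CD1 : forall (A B : ob X) (r s : k) (f g : hom X A B),
      Dc (lincomb r s f g) = lincomb r s (Dc f) (Dc g);
  CD2 : forall (A B : ob X) (r s : k) (f : hom X A B),
      let q1 := comp (pr1 A A) (pr1 (prod A A) A) in
      let q2 := comp (pr2 A A) (pr1 (prod A A) A) in
      let q3 := pr2 (prod A A) A in
      comp (Dc f) (pair q1 (lincomb r s q2 q3))
      = lincomb r s (comp (Dc f) (pair q1 q2)) (comp (Dc f) (pair q1 q3));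
  CD3_id : forall A : ob X, Dc (idm A) = pr2 A A;
  CD3_pr1 : forall A B : ob X,
      Dc (pr1 A B) = comp (pr1 A B) (pr2 (prod A B) (prod A B));
  CD3_pr2 : forall A B : ob X,
      Dc (pr2 A B) = comp (pr2 A B) (pr2 (prod A B) (prod A B));
  CD4 : forall (C A B : ob X) (f : hom X C A) (g : hom X C B), Dc (pair f g) = pair (Dc f) (Dc g);
  CD4_bang : forall A : ob X, Dc (bang A) = bang (prod A A);
  CD5 : forall (A B C : ob X) (g : hom X B C) (f : hom X A B),
      Dc (comp g f) = comp (Dc g) (pair (comp f (pr1 A A)) (Dc f));
  CD6 : forall (A B : ob X) (f : hom X A B),
      comp (Dc (Dc f)) (pair (pair (pr1 A A) (zerom (prod A A) A))
                             (pair (zerom (prod A A) A) (pr2 A A))) = Dc f;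
  CD7 : forall (A B : ob X) (f : hom X A B),
      let P := prod (prod A A) (prod A A) in
      let p1 := comp (pr1 A A) (pr1 (prod A A) (prod A A)) in
      let p2 := comp (pr2 A A) (pr1 (prod A A) (prod A A)) in
      let p3 := comp (pr1 A A) (pr2 (prod A A) (prod A A)) in
      let p4 := comp (pr2 A A) (pr2 (prod A A) (prod A A)) in
      comp (Dc (Dc f)) (pair (pair p1 p2) (pair p3 p4))
      = comp (Dc (Dc f)) (pair (pair p1 p3) (pair p2 p4))
}.

Definition Dlinear (A B : ob X) (f : hom X A B) : Prop := Dc f = comp f (pr2 A A).

Definition castHom (A A' B B' : ob X) (eA : A = A') (eB : B = B') (f : hom X A B) : hom X A' B' :=
  match eA in _ = A0, eB in _ = B0 return hom X A0 B0 with erefl, erefl => f end.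

End CDCLaws.

Record CDC (k : comPzSemiRingType) := {
  cdc_data :> CDCData k;
  cdc_ax : CDCLaws cdc_data
}.

Record StrongCDFunctor (k : comPzSemiRingType) (X Y : CDC k) := {
  fob : ob X -> ob Y;
  fhom : forall A B : ob X, hom X A B -> hom Y (fob A) (fob B);
  fhom_id : forall A, fhom (idm A) = idm (fob A);
  fhom_comp : forall A B C (g : hom X B C) (f : hom X A B),
      fhom (comp g f) = comp (fhom g) (fhom f);
  fhom_lin : forall A B (r s : k) (f g : hom X A B),
      fhom (lincomb r s f g) = lincomb r s (fhom f) (fhom g);
  fterm_inv : hom Y (term Y) (fob (term X));
  fterm_iso : comp (bang (fob (term X))) fterm_inv = idm (term Y)
           /\ comp fterm_inv (bang (fob (term X))) = idm (fob (term X));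
  omega_inv : forall A B, hom Y (prod (fob A) (fob B)) (fob (prod A B));
  omega_iso : forall A B,
      comp (pair (fhom (pr1 A B)) (fhom (pr2 A B))) (omega_inv A B)
        = idm (prod (fob A) (fob B))
   /\ comp (omega_inv A B) (pair (fhom (pr1 A B)) (fhom (pr2 A B)))
        = idm (fob (prod A B));
  fhom_D : forall A B (f : hom X A B),
      Dc (fhom f) = comp (fhom (Dc f)) (omega_inv A A)
}.

Arguments fob {k X Y} s A : rename.
Arguments fhom {k X Y} s {A B} f : rename.
Arguments omega_inv {k X Y} s A B : rename.

Definition omega k (X Y : CDC k) (F : StrongCDFunctor X Y) (A B : ob X)
  : hom Y (fob F (prod A B)) (prod (fob F A) (fob F B)) :=
  pair (fhom F (pr1 A B)) (fhom F (pr2 A B)).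

Record StrictCDFunctor (k : comPzSemiRingType) (X Y : CDC k) := {
  sfob : ob X -> ob Y;
  sfhom : forall A B : ob X, hom X A B -> hom Y (sfob A) (sfob B);
  sfhom_id : forall A, sfhom (idm A) = idm (sfob A);
  sfhom_comp : forall A B C (g : hom X B C) (f : hom X A B),
      sfhom (comp g f) = comp (sfhom g) (sfhom f);
  sfhom_lin : forall A B (r s : k) (f g : hom X A B),
      sfhom (lincomb r s f g) = lincomb r s (sfhom f) (sfhom g);
  sfterm : sfob (term X) = term Y;
  sfprod : forall A B, sfob (prod A B) = prod (sfob A) (sfob B);
  sfomega : forall A B,
      castHom (sfprod A B) erefl (pair (sfhom (pr1 A B)) (sfhom (pr2 A B)))
      = idm (prod (sfob A) (sfob B));
  sfhom_D : forall A B (f : hom X A B),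
      Dc (sfhom f) = castHom (sfprod A A) erefl (sfhom (Dc f))
}.

Arguments sfob {k X Y} s A : rename.
Arguments sfhom {k X Y} s {A B} f : rename.

Record CDMonad (k : comPzSemiRingType) (X : CDC k) := {
  mS :> StrongCDFunctor X X;
  eta : forall A : ob X, hom X A (fob mS A);
  mu : forall A : ob X, hom X (fob mS (fob mS A)) (fob mS A);
  eta_nat : forall A B (f : hom X A B), comp (fhom mS f) (eta A) = comp (eta B) f;
  mu_nat : forall A B (f : hom X A B),
      comp (fhom mS f) (mu A) = comp (mu B) (fhom mS (fhom mS f));
  mu_assoc : forall A, comp (mu A) (fhom mS (mu A)) = comp (mu A) (mu (fob mS A));
  mu_eta_l : forall A, comp (mu A) (eta (fob mS A)) = idm (fob mS A);
  mu_eta_r : forall A, comp (mu A) (fhom mS (eta A)) = idm (fob mS A);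
  eta_Dlin : forall A, Dlinear (eta A);
  mu_Dlin : forall A, Dlinear (mu A)
}.

Arguments eta {k X} m A : rename.
Arguments mu {k X} m A : rename.

Section EM.
Context {k : comPzSemiRingType} {X : CDC k} (S : CDMonad X).

Definition isAlg (A : ob X) (alpha : hom X (fob S A) A) : Prop :=
  comp alpha (mu S A) = comp alpha (fhom S alpha) /\ comp alpha (eta S A) = idm A.

Definition isAlgMor (A B : ob X) (alpha : hom X (fob S A) A) (beta : hom X (fob S B) B)
  (f : hom X A B) : Prop :=
  comp beta (fhom S f) = comp f alpha.

Definition prodAlg (A B : ob X) (alpha : hom X (fob S A) A) (beta : hom X (fob S B) B)
  : hom X (fob S (prod A B)) (prod A B) :=
  comp (pair (comp alpha (pr1 (fob S A) (fob S B))) (comp beta (pr2 (fob S A) (fob S B))))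
       (omega S A B).

Definition termAlg : hom X (fob S (term X)) (term X) := bang (fob S (term X)).

Definition AlgOb := { A : ob X & hom X (fob S A) A }.

End EM.

Arguments isAlg {k X} S {A} alpha.
Arguments isAlgMor {k X} S {A B} alpha beta f.
Arguments prodAlg {k X} S {A B} alpha beta.
Arguments termAlg {k X} S.

From Pilot Require Import Defs.
From mathcomp Require Import all_boot ssralg.
From Stdlib Require Import ProofIrrelevance.
Set Implicit Arguments. Unset Strict Implicit.
Local Open Scope ring_scope.

(* The category-theoretic operations of Defs are shadowed by homonyms from
   the prelude and ssrfun; refer to the categorical ones. *)
Notation comp := Defs.comp.
Notation pair := Defs.pair.
Notation prod := Defs.prod.

(* Let DIFF be the category whose objects are the S-algebras
   (A, alpha) with alpha D-linear and whose maps are the algebra morphisms.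
   Every piece of structure of X restricts to DIFF:
   - D-linear maps are k-linear (by [CD.2]) and closed under composition,
     pairing and the functor S; hence sums, scalar multiples and zero of
     algebra morphisms into a D-linear algebra are again algebra morphisms,
     and products of D-linear algebras are D-linear algebras;
   - differentiating the morphism equation beta o S f = f o alpha with the
     chain rule [CD.5] and using D-linearity of alpha, beta and the strong
     differential structure of S shows that D[f] is an algebra morphism
     (A x A, (alpha x alpha) o omega) -> (B, beta);
   - all axioms of a Cartesian k-differential category then hold in DIFF
     because they hold for the underlying maps in X.
   The forgetful functor DIFF -> X is then strict by construction. *)

Section CartesianDifferential.
Context {k : comPzSemiRingType} (X : CDC k).
Let ax := cdc_ax X.

Lemma lincomb11 (A B : ob X) (f g : hom X A B) : lincomb 1 1 f g = addm f g.
Proof. by rewrite /lincomb !(scal1m ax). Qed.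

Lemma lincomb00 (A B : ob X) (f g : hom X A B) : lincomb 0 0 f g = zerom A B.
Proof. by rewrite /lincomb !(scal0m ax) (add0m ax). Qed.

Lemma lincombr0 (A B : ob X) r (f g : hom X A B) : lincomb r 0 f g = scalm r f.
Proof. by rewrite /lincomb (scal0m ax) (addmC ax) (add0m ax). Qed.

Lemma comp_pair (C D A B : ob X) (f : hom X C A) (g : hom X C B) (h : hom X D C) :
  comp (pair f g) h = pair (comp f h) (comp g h).
Proof. by rewrite [LHS](pair_uniq ax) !(comp_assoc ax) (pr1_pair ax) (pr2_pair ax). Qed.

Lemma pair_pr (A B : ob X) : pair (pr1 A B) (pr2 A B) = idm (prod A B).
Proof. by rewrite [RHS](pair_uniq ax) !(comp_id_r ax). Qed.

Lemma prod_ext (C A B : ob X) (h h' : hom X C (prod A B)) :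
  comp (pr1 A B) h = comp (pr1 A B) h' -> comp (pr2 A B) h = comp (pr2 A B) h' -> h = h'.
Proof. by move=> E1 E2; rewrite (pair_uniq ax h) (pair_uniq ax h') E1 E2. Qed.

Lemma comp0m (A B C : ob X) (x : hom X A B) : comp (zerom B C) x = zerom A C.
Proof. by rewrite -(lincomb00 (zerom B C) (zerom B C)) (comp_linl ax) lincomb00. Qed.

Lemma Dlinear_at (A B C : ob X) (f : hom X A B) (x z : hom X C A) :
  Dlinear f -> comp f z = comp (Dc f) (pair x z).
Proof. by move=> Df; rewrite Df -(comp_assoc ax) (pr2_pair ax). Qed.

(* D-linear maps are k-linear: [CD.2] evaluated at <<x, x>, y>. *)
Lemma Dlinear_linear (A B C : ob X) (f : hom X A B) r s (x y : hom X C A) :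
  Dlinear f -> comp f (lincomb r s x y) = lincomb r s (comp f x) (comp f y).
Proof.
move=> Df; have CD2f := CD2 ax r s f; cbv zeta in CD2f.
have := f_equal (fun m => comp m (pair (pair x x) y)) CD2f; cbv beta.
do 3 rewrite ?(comp_linl ax) -?(comp_assoc ax) ?comp_pair ?(pr1_pair ax) ?(pr2_pair ax).
by rewrite !(Dlinear_at x _ Df) => ->.
Qed.

Lemma Dlinear_zero (A B C : ob X) (f : hom X A B) :
  Dlinear f -> comp f (zerom C A) = zerom C B.
Proof.
move=> Df.
by rewrite -(lincomb00 (zerom C A) (zerom C A)) (Dlinear_linear _ _ _ _ Df) lincomb00.
Qed.

Lemma Dlinear_comp (A B C : ob X) (g : hom X B C) (f : hom X A B) :
  Dlinear g -> Dlinear f -> Dlinear (comp g f).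
Proof.
move=> Dg Df.
by rewrite /Dlinear (CD5 ax) Dg -(comp_assoc ax) (pr2_pair ax) Df (comp_assoc ax).
Qed.

Lemma Dlinear_pair (C A B : ob X) (f : hom X C A) (g : hom X C B) :
  Dlinear f -> Dlinear g -> Dlinear (pair f g).
Proof. by move=> Df Dg; rewrite /Dlinear (CD4 ax) Df Dg comp_pair. Qed.

Lemma Dlinear_pr1 (A B : ob X) : Dlinear (pr1 A B).
Proof. exact: (CD3_pr1 ax). Qed.

Lemma Dlinear_pr2 (A B : ob X) : Dlinear (pr2 A B).
Proof. exact: (CD3_pr2 ax). Qed.

Variable F : StrongCDFunctor X X.

Lemma fhom0 (A B : ob X) : fhom F (zerom A B) = zerom (fob F A) (fob F B).
Proof. by rewrite -(lincomb00 (zerom A B) (zerom A B)) (fhom_lin F) lincomb00. Qed.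

Lemma fpr2_omega_inv (A B : ob X) : comp (fhom F (pr2 A B)) (omega_inv F A B) = pr2 _ _.
Proof.
have := f_equal (comp (pr2 _ _)) (proj1 (omega_iso F A B)).
by rewrite (comp_assoc ax) (pr2_pair ax) (comp_id_r ax).
Qed.

Lemma fhom_Dlinear (A B : ob X) (f : hom X A B) : Dlinear f -> Dlinear (fhom F f).
Proof.
move=> Df.
by rewrite /Dlinear (fhom_D F) Df (fhom_comp F) -(comp_assoc ax) fpr2_omega_inv.
Qed.

End CartesianDifferential.

Section AlgebraMorphisms.
Context {k : comPzSemiRingType} (X : CDC k) (S : CDMonad X).
Let ax := cdc_ax X.

Lemma algmor_id (A : ob X) (a : hom X (fob S A) A) : isAlgMor S a a (idm A).
Proof. by rewrite /isAlgMor (fhom_id S) (comp_id_r ax) (comp_id_l ax). Qed.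

Lemma algmor_comp (A B C : ob X) a b c (g : hom X B C) (f : hom X A B) :
  isAlgMor S b c g -> isAlgMor S a b f -> isAlgMor (A:=A) S a c (comp g f).
Proof.
move=> Mg Mf.
by rewrite /isAlgMor (fhom_comp S) (comp_assoc ax) Mg -(comp_assoc ax) Mf (comp_assoc ax).
Qed.

(* Linear combinations of algebra morphisms into an algebra with D-linear
   (hence k-linear) structure map are algebra morphisms. *)
Lemma algmor_lincomb (A B : ob X) a b r s (f g : hom X A B) :
  Dlinear b -> isAlgMor S a b f -> isAlgMor S a b g -> isAlgMor S a b (lincomb r s f g).
Proof.
move=> Db Mf Mg.
by rewrite /isAlgMor (fhom_lin S) (Dlinear_linear _ _ _ _ Db) Mf Mg (comp_linl ax).
Qed.

Lemma algmor_add (A B : ob X) a b (f g : hom X A B) :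
  Dlinear b -> isAlgMor S a b f -> isAlgMor S a b g -> isAlgMor S a b (addm f g).
Proof. by move=> *; rewrite -lincomb11; apply: algmor_lincomb. Qed.

Lemma algmor_scal (A B : ob X) a b r (f : hom X A B) :
  Dlinear b -> isAlgMor S a b f -> isAlgMor S a b (scalm r f).
Proof. by move=> *; rewrite -(lincombr0 r f f); apply: algmor_lincomb. Qed.

Lemma algmor_zero (A B : ob X) a b :
  Dlinear b -> isAlgMor S (A:=A) (B:=B) a b (zerom A B).
Proof. by move=> Db; rewrite /isAlgMor (fhom0 S) (Dlinear_zero _ Db) comp0m. Qed.

Lemma prodAlg_pr1 (A B : ob X) a b :
  comp (pr1 A B) (prodAlg S a b) = comp a (fhom S (pr1 A B)).
Proof.
by rewrite /prodAlg /omega (comp_assoc ax) (pr1_pair ax) -(comp_assoc ax) (pr1_pair ax).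
Qed.

Lemma prodAlg_pr2 (A B : ob X) a b :
  comp (pr2 A B) (prodAlg S a b) = comp b (fhom S (pr2 A B)).
Proof.
by rewrite /prodAlg /omega (comp_assoc ax) (pr2_pair ax) -(comp_assoc ax) (pr2_pair ax).
Qed.

(* The same, under a precomposition (plain associativity would unfold prodAlg). *)
Lemma prodAlg_pr1_comp (A B C : ob X) a b (h : hom X C _) :
  comp (pr1 A B) (comp (prodAlg S a b) h) = comp a (comp (fhom S (pr1 A B)) h).
Proof. by rewrite (comp_assoc ax) prodAlg_pr1 (comp_assoc ax). Qed.

Lemma prodAlg_pr2_comp (A B C : ob X) a b (h : hom X C _) :
  comp (pr2 A B) (comp (prodAlg S a b) h) = comp b (comp (fhom S (pr2 A B)) h).
Proof. by rewrite (comp_assoc ax) prodAlg_pr2 (comp_assoc ax). Qed.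

Lemma algmor_pr1 (A B : ob X) a b : isAlgMor S (prodAlg S a b) a (pr1 A B).
Proof. by rewrite /isAlgMor prodAlg_pr1. Qed.

Lemma algmor_pr2 (A B : ob X) a b : isAlgMor S (prodAlg S a b) b (pr2 A B).
Proof. by rewrite /isAlgMor prodAlg_pr2. Qed.

Lemma algmor_pair (C A B : ob X) c a b (f : hom X C A) (g : hom X C B) :
  isAlgMor S c a f -> isAlgMor S c b g -> isAlgMor S c (prodAlg S a b) (pair f g).
Proof.
rewrite /isAlgMor => Mf Mg; apply: prod_ext.
- by rewrite prodAlg_pr1_comp -(fhom_comp S) !(pr1_pair ax) Mf (comp_assoc ax) (pr1_pair ax).
- by rewrite prodAlg_pr2_comp -(fhom_comp S) !(pr2_pair ax) Mg (comp_assoc ax) (pr2_pair ax).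
Qed.

Lemma algmor_bang (A : ob X) a : isAlgMor S a (termAlg S) (bang A).
Proof. by rewrite /isAlgMor (bang_uniq ax (comp _ _)) (bang_uniq ax (comp (bang A) a)). Qed.

(* The derivative of an algebra morphism between D-linear algebras is an
   algebra morphism out of the product algebra: apply D to the morphism
   equation and use [CD.5], D-linearity and D[S h] = S(D[h]) o omega^{-1}. *)
Lemma algmor_D (A B : ob X) a b (f : hom X A B) :
  Dlinear a -> Dlinear b -> isAlgMor S a b f -> isAlgMor S (prodAlg S a a) b (Dc f).
Proof.
move=> Da Db Mf.
have chain : comp (comp b (fhom S (Dc f))) (omega_inv S A A)
             = comp (Dc f) (pair (comp a (pr1 _ _)) (comp a (pr2 _ _))).
  have := f_equal Dc Mf.
  rewrite !(CD5 ax) Db Da -(comp_assoc ax) (pr2_pair ax) (fhom_D S).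
  by rewrite (comp_assoc ax).
rewrite /isAlgMor -[comp b (fhom S (Dc f))](comp_id_r ax) -(proj2 (omega_iso S A A)).
by rewrite (comp_assoc ax) chain /prodAlg (comp_assoc ax).
Qed.

End AlgebraMorphisms.

Section DifferentialAlgebras.
Context {k : comPzSemiRingType} (X : CDC k) (S : CDMonad X).
Let ax := cdc_ax X.

Definition DlinAlg (A : ob X) (a : hom X (fob S A) A) : Prop := isAlg S a /\ Dlinear a.

Lemma prodAlg_isAlg (A B : ob X) a b :
  isAlg S a -> isAlg S b -> isAlg S (prodAlg S (A:=A) (B:=B) a b).
Proof.
move=> [mua etaa] [mub etab]; split; apply: prod_ext.
- rewrite !prodAlg_pr1_comp (mu_nat S) -(fhom_comp S) prodAlg_pr1 (fhom_comp S).
  by rewrite !(comp_assoc ax) mua.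
- rewrite !prodAlg_pr2_comp (mu_nat S) -(fhom_comp S) prodAlg_pr2 (fhom_comp S).
  by rewrite !(comp_assoc ax) mub.
- by rewrite prodAlg_pr1_comp (eta_nat S) (comp_assoc ax) etaa (comp_id_l ax) (comp_id_r ax).
- by rewrite prodAlg_pr2_comp (eta_nat S) (comp_assoc ax) etab (comp_id_l ax) (comp_id_r ax).
Qed.

(* (alpha x beta) o omega is built from D-linear maps by composition,
   pairing and S. *)
Lemma prodAlg_Dlinear (A B : ob X) a b :
  Dlinear a -> Dlinear b -> Dlinear (prodAlg S (A:=A) (B:=B) a b).
Proof.
move=> Da Db; rewrite /prodAlg /omega.
apply: Dlinear_comp; apply: Dlinear_pair.
- exact: Dlinear_comp Da (Dlinear_pr1 _ _).
- exact: Dlinear_comp Db (Dlinear_pr2 _ _).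
- exact: fhom_Dlinear (Dlinear_pr1 _ _).
- exact: fhom_Dlinear (Dlinear_pr2 _ _).
Qed.

Lemma prodAlg_DlinAlg (A B : ob X) a b :
  DlinAlg a -> DlinAlg b -> DlinAlg (prodAlg S (A:=A) (B:=B) a b).
Proof.
by move=> [Aa Da] [Ab Db]; split; [apply: prodAlg_isAlg | apply: prodAlg_Dlinear].
Qed.

Lemma termAlg_DlinAlg : DlinAlg (termAlg S).
Proof.
split; first split.
- by rewrite (bang_uniq ax (comp _ _)) (bang_uniq ax (comp (termAlg S) _)).
- by rewrite (bang_uniq ax (comp _ _)) [RHS](bang_uniq ax).
- by rewrite /Dlinear /termAlg (CD4_bang ax) [RHS](bang_uniq ax).
Qed.

Definition DOb := {s : AlgOb S | DlinAlg (projT2 s)}.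
Definition car (c : DOb) : ob X := projT1 (proj1_sig c).
Definition alg (c : DOb) : hom X (fob S (car c)) (car c) := projT2 (proj1_sig c).

Lemma DlinAlg_alg (c : DOb) : DlinAlg (alg c).
Proof. exact: (proj2_sig c). Qed.

Definition mkDOb (A : ob X) (a : hom X (fob S A) A) (Ha : DlinAlg a) : DOb :=
  exist (fun s : AlgOb S => DlinAlg (projT2 s))
    (existT (fun B => hom X (fob S B) B) A a) Ha.

Lemma DOb_eq (c : DOb) (A : ob X) (a : hom X (fob S A) A) (Ha : DlinAlg a) :
  existT (fun B => hom X (fob S B) B) (car c) (alg c)
  = existT (fun B => hom X (fob S B) B) A a -> mkDOb Ha = c.
Proof.
case: c => [[A' a'] Ha'] E; rewrite /car /alg /= in E.
by move: Ha'; rewrite E => Ha'; rewrite /mkDOb (proof_irrelevance _ Ha' Ha).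
Qed.

Definition DHom (c d : DOb) := {f : hom X (car c) (car d) | isAlgMor S (alg c) (alg d) f}.

Lemma DHom_eq (c d : DOb) (f g : DHom c d) : proj1_sig f = proj1_sig g -> f = g.
Proof. by case: f g => f Mf [g Mg] /= E; subst g; rewrite (proof_irrelevance _ Mf Mg). Qed.

Definition Did (c : DOb) : DHom c c := exist _ (idm (car c)) (algmor_id _).
Definition Dcomp (c d e : DOb) (g : DHom d e) (f : DHom c d) : DHom c e :=
  exist _ (comp (proj1_sig g) (proj1_sig f)) (algmor_comp (proj2_sig g) (proj2_sig f)).
Definition Dadd (c d : DOb) (f g : DHom c d) : DHom c d :=
  exist _ (addm (proj1_sig f) (proj1_sig g))
    (algmor_add (proj2 (DlinAlg_alg d)) (proj2_sig f) (proj2_sig g)).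
Definition Dzero (c d : DOb) : DHom c d :=
  exist _ (zerom (car c) (car d)) (algmor_zero _ (proj2 (DlinAlg_alg d))).
Definition Dscal (c d : DOb) (r : k) (f : DHom c d) : DHom c d :=
  exist _ (scalm r (proj1_sig f)) (algmor_scal r (proj2 (DlinAlg_alg d)) (proj2_sig f)).
Definition Dterm : DOb := mkDOb termAlg_DlinAlg.
Definition Dbang (c : DOb) : DHom c Dterm := exist _ (bang (car c)) (algmor_bang _).
Definition Dprod (c d : DOb) : DOb :=
  mkDOb (prodAlg_DlinAlg (DlinAlg_alg c) (DlinAlg_alg d)).
Definition Dpr1 (c d : DOb) : DHom (Dprod c d) c :=
  exist _ (pr1 (car c) (car d)) (algmor_pr1 _ _).
Definition Dpr2 (c d : DOb) : DHom (Dprod c d) d :=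
  exist _ (pr2 (car c) (car d)) (algmor_pr2 _ _).
Definition Dpair (e c d : DOb) (f : DHom e c) (g : DHom e d) : DHom e (Dprod c d) :=
  exist _ (pair (proj1_sig f) (proj1_sig g)) (algmor_pair (proj2_sig f) (proj2_sig g)).
Definition Dderiv (c d : DOb) (f : DHom c d) : DHom (Dprod c c) d :=
  exist _ (Dc (proj1_sig f))
    (algmor_D (proj2 (DlinAlg_alg c)) (proj2 (DlinAlg_alg d)) (proj2_sig f)).

Definition DIFFData : CDCData k :=
  @Build_CDCData k DOb DHom Did Dcomp Dadd Dzero Dscal Dterm Dbang Dprod
    Dpr1 Dpr2 Dpair Dderiv.

(* Every axiom holds in DIFF since it holds for the underlying maps in X. *)
Lemma DIFFLaws : CDCLaws DIFFData.
Proof.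
case: ax => *; constructor; intros; apply: DHom_eq; cbn; unfold lincomb in *; by auto.
Qed.

Definition DIFF : CDC k := Build_CDC DIFFLaws.

(* The forgetful functor is strict: products, maps and D are those of X. *)
Definition forget : StrictCDFunctor DIFF X :=
  @Build_StrictCDFunctor k DIFF X car (fun c d f => proj1_sig f)
    (fun _ => erefl) (fun _ _ _ _ _ => erefl) (fun _ _ _ _ _ _ => erefl)
    erefl (fun _ _ => erefl) (fun c d => pair_pr (car c) (car d)) (fun _ _ _ => erefl).

End DifferentialAlgebras.

Theorem mainTheorem11 (k : comPzSemiRingType) (X : CDC k) (S : CDMonad X) :
  (exists (C : CDC k) (U : StrictCDFunctor C X)
          (alg : forall c : ob C, hom X (fob S (sfob U c)) (sfob U c)),
     (forall c : ob C, isAlg S (alg c) /\ Dlinear (alg c))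
  /\ (forall (A : ob X) (alpha : hom X (fob S A) A),
        isAlg S alpha -> Dlinear alpha ->
        exists! c : ob C,
          existT (fun B => hom X (fob S B) B) (sfob U c) (alg c)
          = existT (fun B => hom X (fob S B) B) A alpha)
  /\ (forall (c d : ob C) (g : hom X (sfob U c) (sfob U d)),
        isAlgMor S (alg c) (alg d) g <-> exists! f : hom C c d, sfhom U f = g)
  /\ (forall c d : ob C,
        existT (fun B => hom X (fob S B) B) (sfob U (prod c d)) (alg (prod c d))
        = existT (fun B => hom X (fob S B) B) (prod (sfob U c) (sfob U d))
                 (prodAlg S (alg c) (alg d)))
  /\ existT (fun B => hom X (fob S B) B) (sfob U (term C)) (alg (term C))
     = existT (fun B => hom X (fob S B) B) (term X) (termAlg S))
  /\ (forall (A B : ob X) (alpha : hom X (fob S A) A) (beta : hom X (fob S B) B)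
             (f : hom X A B),
        isAlg S alpha -> Dlinear alpha -> isAlg S beta -> Dlinear beta ->
        isAlgMor S alpha beta f ->
        isAlgMor S (prodAlg S alpha alpha) beta (Dc f)).
Proof.
split; last by move=> A B alpha beta f _ Da _ Db; apply: algmor_D.
exists (DIFF S), (forget S), (@alg k X S).
split; first exact: DlinAlg_alg.
split.
-
  move=> A alpha Aa Da; exists (mkDOb (conj Aa Da)); split=> // c; exact: DOb_eq.
-
  split=> // c d g; split.
  + by move=> Mg; exists (exist _ g Mg); split=> // f Ef; apply: DHom_eq.
  + by move=> [f [<- _]]; exact: (proj2_sig f).
Qed.
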